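(* Let $\kappa$ be an infinite cardinal and let $(F_\xi)_{\xi\in\kappa}$ be a family of nonempty finite sets. Then there exists a set $X$ such that (i) $|\{\xi\in\kappa:|F_\xi\cap X|=1\}|=\kappa$; and moreover $X$ can be chosen so that, in addition to (i): (ii) $|X|$ is equal to $1$, to $\mathrm{cf}(\kappa)$, or to $\kappa$; (iii) every subset $X'\subseteq X$ with $|X'|=|X|$ also satisfies $|\{\xi\in\kappa:|F_\xi\cap X'|=1\}|=\kappa$; (iv) for each $x\in X$ there is at least one $\xi\in\kappa$ with $F_\xi\cap X=\{x\}$.
   Context: $\mathrm{cf}(\kappa)$ denotes the cofinality of the cardinal $\kappa$. *)

From HB Require Import structures.
From mathcomp Require Import all_boot all_order all_algebra.
From mathcomp Require Import all_classical.
Set Implicit Arguments. Unset Strict Implicit. Unset Printing Implicit Defensive.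
Local Open Scope classical_set_scope.
Local Open Scope card_scope.

(* The infinite cardinal kappa is represented, as in von Neumann set theory,
   by the set of ordinals below it: a type K with a strict well-order [lt]
   which is an initial ordinal (no proper initial segment is equinumerous
   with the whole). *)
Definition initial_ordinal (K : Type) (lt : K -> K -> Prop) : Prop :=
  [/\ (forall a, ~ lt a a),
      (forall a b c, lt a b -> lt b c -> lt a c),
      (forall a b, [\/ lt a b, a = b | lt b a]),
      well_founded lt &
      (forall a, ~ ([set: K] #<= [set b | lt b a]))].

Definition cofinal (K : Type) (lt : K -> K -> Prop) (C : set K) : Prop :=
  forall a, exists2 c, C c & (lt a c \/ a = c).

Definition card_is_cf (K : Type) (lt : K -> K -> Prop) (T : Type) (X : set T) : Prop :=
  exists C : set K, [/\ cofinal lt C,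
                        (forall C' : set K, cofinal lt C' -> C #<= C') &
                        X #= C].

Definition kappa_many_singletons (K T : Type) (F : K -> set T) (X : set T) : Prop :=
  [set xi | (F xi `&` X) #= [set: unit]] #= [set: K].

(* If some point lies in kappa many F_xi, take X = {x}.  Otherwise take a
   maximal pairwise disjoint subfamily E; if |E| = kappa, one point from each
   of its members works.  If |E| < kappa, every F_xi meets the union U of E,
   |U| < kappa, and the trace F_xi /\ U is one of fewer than kappa finite
   subsets of U.  Recursively along cf(kappa), choose pairwise disjoint traces
   A_i whose fibers {xi | F_xi /\ U = A_i} exceed cardinals cofinal in kappa:
   at each stage fewer than cf(kappa) finite sets have been chosen, so fewer
   than kappa indices have a trace meeting them, and by pigeonhole the others
   have a trace with a large fiber.  Let X consist of one point of each A_i.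
   Every X' <= X with |X'| = |X| still meets cofinally many A_i, whose fibers
   give kappa many xi with F_xi /\ X' a singleton. *)

From HB Require Import structures.
From mathcomp Require Import all_boot all_order all_algebra.
From mathcomp Require Import all_classical.
Set Implicit Arguments. Unset Strict Implicit. Unset Printing Implicit Defensive.
Local Open Scope classical_set_scope.
Local Open Scope card_scope.

(* Unlike [A #<= B], this needs no default element of the codomain. *)
Definition injle T U (A : set T) (B : set U) :=
  exists f : T -> U, (forall x, A x -> B (f x)) /\
    (forall x y, A x -> A y -> f x = f y -> x = y).

Lemma injle_refl T (A : set T) : injle A A.
Proof. by exists id. Qed.

Lemma injle_trans T U V (A : set T) (B : set U) (C : set V) :
  injle A B -> injle B C -> injle A C.
Proof.
move=> [f [fAB fi]] [g [gBC gi]]; exists (g \o f); split=> [x Ax|x y Ax Ay /= e].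
  exact/gBC/fAB.
by apply: fi => //; apply: gi => //; apply: fAB.
Qed.

Lemma subset_injle T (A B : set T) : A `<=` B -> injle A B.
Proof. by move=> AB; exists id; split=> // x /AB. Qed.

Lemma injle_setX T T' U U' (A : set T) (A' : set T') (B : set U) (B' : set U') :
  injle A A' -> injle B B' -> injle (A `*` B) (A' `*` B').
Proof.
move=> [f [fA fi]] [g [gB gi]]; exists (fun p => (f p.1, g p.2)); split.
  by move=> [x y] [/= Ax By]; split; [apply: fA|apply: gB].
by move=> [x y] [x' y'] [/= Ax By] [/= Ax' By'] [/fi -> // /gi ->].
Qed.

Lemma injle_card_le T U (A : set T) (B : set U) : injle A B -> A #<= B.
Proof.
move=> [f [fAB finj]].
have [g] : $|{injfun A >-> B}|.
  apply/injfunPex; exists f; first by move=> x /fAB.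
  by move=> x y /set_mem Ax /set_mem Ay; apply: finj.
exact: inj_card_le g.
Qed.

Lemma card_le_injle T U (u0 : U) (A : set T) (B : set U) : A #<= B -> injle A B.
Proof.
elim/Ppointed: U => U in B u0 *; first by case: (no u0).
move=> /pcard_leP /injfunPex [f fAB finj]; exists f; split.
  by move=> x Ax; apply: fAB.
by move=> x y Ax Ay; apply: finj; rewrite inE.
Qed.

Lemma card_eq_injle T U (u0 : U) (A : set T) (B : set U) : A #= B -> injle A B.
Proof. by move=> /card_eqPle [AB _]; exact: (card_le_injle u0 AB). Qed.

Lemma injle_card_eq T U (A : set T) (B : set U) : injle A B -> injle B A -> A #= B.
Proof. by move=> /injle_card_le AB /injle_card_le BA; apply: Cantor_Bernstein. Qed.

Lemma injle_finite T U (A : set T) (B : set U) : injle A B -> finite_set B -> finite_set A.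
Proof. by move=> /injle_card_le; apply: card_le_finite. Qed.

Lemma infinite_injle_nat T (A : set T) (x : T) : infinite_set A -> injle [set: nat] A.
Proof. by move=> /infiniteP /(card_le_injle x). Qed.

Lemma card_eq_set1 T (S : set T) x : S = [set x] -> S #= [set: unit].
Proof.
move=> ->; apply: injle_card_eq.
  by exists (fun _ => tt); split => // a b -> ->.
by exists (fun _ => x); split => // [] [] [].
Qed.

Lemma injle_image T U (x0 : T) (f : T -> U) (A : set T) : injle (f @` A) A.
Proof.
pose g y := if pselect (exists2 x, A x & f x = y) is left H then s2val (cid2 H) else x0.
have gP y : (f @` A) y -> A (g y) /\ f (g y) = y.
  move=> [x Ax fx]; rewrite /g; case: pselect => [H|[]]; last by exists x.
  by case: (cid2 H).
exists g; split; first by move=> y /gP [].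
by move=> y y' /gP [_ e] /gP [_ e'] E; rewrite -e -e' E.
Qed.

Lemma injle_bigcup_finite J T (j0 : J) (D : set J) (B : J -> set T) :
  (forall j, D j -> finite_set (B j)) ->
  injle (\bigcup_(j in D) B j) (D `*` [set: nat]).
Proof.
move=> Bfin.
have /choice [code codeP] : forall j, exists f : T -> nat,
    D j -> forall t t', B j t -> B j t' -> f t = f t' -> t = t'.
  move=> j; have [Dj|nDj] := pselect (D j); last by exists (fun _ => 0%N).
  have [n Bn] := Bfin _ Dj; have [f [_ fi]] := card_eq_injle 0%N Bn.
  by exists f => _; apply: fi.
have /choice [idx idxP] : forall t, exists j, (\bigcup_(j in D) B j) t -> D j /\ B j t.
  move=> t; have [[j Dj Bjt]|nt] := pselect ((\bigcup_(j in D) B j) t).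
    by exists j.
  by exists j0.
exists (fun t => (idx t, code (idx t) t)); split; first by move=> t /idxP [].
move=> t t' /idxP [Dj Bt] /idxP [_ Bt'] [e e2].
by rewrite -e in Bt' e2; exact: (codeP _ Dj _ _ Bt Bt' e2).
Qed.

Lemma card_eq_setD1 T (A : set T) n y : A #= `I_n.+1 -> A y -> A `\ y #= `I_n.
Proof.
move=> /eq_cardSP [x Ax Hx] Ay; have [->//|yx] := pselect (y = x).
apply: card_eq_trans Hx.
pose swap z := if pselect (z = x) then y else if pselect (z = y) then x else z.
have swap_x : swap x = y by rewrite /swap; case: pselect.
have swap_y : swap y = x.
  by rewrite /swap; destruct (pselect (y = x)); last case: pselect.
have swap_id z : z <> x -> z <> y -> swap z = z.
  by move=> zx zy; rewrite /swap; destruct (pselect (z = x)); last case: pselect.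
have swapK z : swap (swap z) = z.
  have [->|zx] := pselect (z = x); first by rewrite swap_x swap_y.
  have [->|zy] := pselect (z = y); first by rewrite swap_y swap_x.
  by rewrite !swap_id.
have swapD z : (A `\ x) z -> (A `\ y) (swap z).
  move=> [Az /= zx]; have [->|zy] := pselect (z = y).
    by rewrite swap_y; split => // xy; apply: yx.
  by rewrite swap_id.
have swapD' z : (A `\ y) z -> (A `\ x) (swap z).
  move=> [Az /= zy]; have [->|zx] := pselect (z = x); first by rewrite swap_x.
  by rewrite swap_id.
apply: injle_card_eq; exists swap; split => // a b _ _ /(congr1 swap);
  by rewrite !swapK.
Qed.

Lemma injle_shift T (A : set T) (e : nat -> T) k : (forall n, A (e n)) -> injective e ->
  injle A (A `\` [set e k]).
Proof.
move=> Ae ei.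
pose h y := if pselect (exists2 n, y = e n & (k <= n)%N) is left H
  then e (s2val (cid2 H)).+1 else y.
have hE y n : y = e n -> (k <= n)%N -> h y = e n.+1.
  move=> yE kn; rewrite /h; case: pselect => [H|[]]; last by exists n.
  by case: (cid2 H) => m /= ym _; rewrite yE in ym; rewrite (ei _ _ ym).
have hN y : ~ (exists2 n, y = e n & (k <= n)%N) -> h y = y.
  by move=> H; rewrite /h; case: pselect.
exists h; split=> [y Ay|y y' Ay Ay'].
  have [[n yn kn]|H] := pselect (exists2 n, y = e n & (k <= n)%N); last first.
    by rewrite hN //; split => // yk; apply: H; exists k.
  rewrite (hE _ _ yn kn); split => // /ei/eqP; rewrite eqn_leq => /andP[+ _].
  by rewrite ltnNge kn.
have [[n yn kn]|H] := pselect (exists2 n, y = e n & (k <= n)%N);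
have [[n' yn' kn']|H'] := pselect (exists2 n, y' = e n & (k <= n)%N).
- by rewrite (hE _ _ yn kn) (hE _ _ yn' kn') => /ei [] nn'; rewrite yn yn' nn'.
- by rewrite (hE _ _ yn kn) hN // => ey'; case: H'; exists n.+1 => //; apply: leqW.
- by rewrite hN // (hE _ _ yn' kn') => ey; case: H; exists n'.+1 => //; apply: leqW.
- by rewrite !hN.
Qed.

Lemma infinite_injle_setD1 T (A : set T) x : infinite_set A -> A x -> injle A (A `\ x).
Proof.
move=> Ainf Ax; have [f [fA fi]] := infinite_injle_nat x Ainf.
have {}fi : injective f by move=> a b; apply: fi.
have {}fA n : A (f n) by apply: fA.
have [[k <-]|nr] := pselect (exists k, f k = x); first exact: injle_shift.
pose e n := if n is m.+1 then f m else x.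
apply: (@injle_shift _ _ e 0); first by case.
by move=> [|a] [|b] //= => [xf|fx|/fi -> //]; case: nr; [exists b|exists a].
Qed.

Section WellFounded.
Variables (W : Type) (R : W -> W -> Prop).
Hypothesis wfR : well_founded R.

Lemma wf_least (A : set W) : A !=set0 -> exists2 w, A w & forall y, A y -> ~ R y w.
Proof.
move=> [a Aa]; elim/(well_founded_ind wfR): a Aa => a IH Aa.
have [[y [Ay Rya]]|H] := pselect (exists y, A y /\ R y a); first exact: IH Rya Ay.
by exists a => // y Ay Rya; apply: H; exists y.
Qed.

(* Transfinite recursion with a choice at each stage: [Q w f] is the set of
   admissible values at [w] given the values [f] at the predecessors of [w]. *)
Lemma wf_rec_choice V (v0 : V) (Q : W -> (W -> V) -> set V) :
    (forall w f g v, (forall y, R y w -> f y = g y) -> Q w f v -> Q w g v) ->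
  exists f : W -> V, forall w, Q w f !=set0 -> Q w f (f w).
Proof.
move=> Qloc.
have QE w f g : (forall y, R y w -> f y = g y) -> Q w f = Q w g.
  move=> fg; apply/funext => v; apply/propext; split; apply: Qloc => // y /fg //.
pose ext w (r : forall y, R y w -> V) y :=
  if pselect (R y w) is left p then r y p else v0.
pose step w r := if pselect (Q w (ext w r) !=set0) is left H
  then projT1 (cid H) else v0.
pose f := Fix wfR (fun=> V) step.
have fE w : f w = step w (fun y _ => f y).
  apply: Fix_eq => x r r' rr'; congr step.
  by apply: functional_extensionality_dep => y; apply: funext.
have extE w : Q w (ext w (fun y _ => f y)) = Q w f.
  by apply: QE => y Ryw; rewrite /ext; case: pselect.
exists f => w; rewrite fE /step extE; case: pselect => // H _.
exact: projT2 (cid H).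
Qed.

Lemma wf_disjoint_choice T (I : set W) (P : W -> set (set T)) :
    (forall i (A : W -> set T), I i -> (forall j, I j -> R j i -> P j (A j)) ->
      exists2 B, P i B & forall j, I j -> R j i -> A j `&` B = set0) ->
  exists A : W -> set T, (forall i, I i -> P i (A i)) /\
    (forall i j, I i -> I j -> R j i -> A j `&` A i = set0).
Proof.
move=> step.
pose Q i (A : W -> set T) B := P i B /\ forall j, I j -> R j i -> A j `&` B = set0.
have [|A AP] := @wf_rec_choice _ set0 Q.
  by move=> i f g B fg [PB fB]; split=> // j Ij Rji; rewrite -fg //; apply: fB.
suff QA i : I i -> Q i A (A i).
  by exists A; split=> [i /QA []|i j /QA [_ disj] Ij Rji]; last exact: disj.
elim/(well_founded_ind wfR): i => i IH Ii; apply: AP.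
have [|B PB AB] := step i A Ii; first by move=> j Ij Rji; have [] := IH j Rji Ij.
by exists B.
Qed.

Hypothesis totR : forall a b, [\/ R a b, a = b | R b a].

(* Enumerate [Z] injectively along [D]: either [D] runs out first, or [Z]
   runs out at some [w]. *)
Lemma injle_or_injle_segment V (v0 : V) (D : set W) (Z : set V) :
  injle D Z \/ exists2 w, D w & injle Z [set y | D y /\ R y w].
Proof.
pose Q w (f : W -> V) v := [/\ D w, Z v & forall y, D y -> R y w -> f y <> v].
have [|f fP] := @wf_rec_choice _ v0 Q.
  by move=> w f g v fg [Dw Zv fv]; split=> // y Dy Ryw; rewrite -fg //; apply: fv.
have [Dfull|] := pselect (forall w, D w -> Q w f !=set0).
  left; exists f; split=> [w /Dfull /fP [] //|x y Dx Dy fxy].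
  have [Rxy|//|Ryx] := totR x y.
    by have [_ _ /(_ x Dx Rxy)] := fP _ (Dfull _ Dy).
  by have [_ _ /(_ y Dy Ryx)] := fP _ (Dfull _ Dx); rewrite fxy.
move=> /existsNP [w1 /not_implyP [Dw1 nw1]]; right.
exists w1 => //; apply: injle_trans (injle_image w1 f _).
apply: subset_injle => v Zv; apply: contrapT => nv; apply: nw1.
exists v; split=> // y Dy Ryw fyv.
apply: nv; exists y => //; split=> //; exact: Ryw.
Qed.

End WellFounded.

Lemma card_eq_I0 T (A : set T) : A #= `I_0 -> A = set0.
Proof.
move=> /card_eqPle [AI _]; apply/seteqP; split=> // x Ax.
by have [f [/(_ x Ax) //]] := card_le_injle 0%N AI.
Qed.

Section FiniteSubsets.
Variables (W : Type) (S : set W) (z0 : W) (pair : W * W -> W).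
Hypothesis z0S : S z0.
Hypothesis pairS : forall a b, S a -> S b -> S (pair (a, b)).
Hypothesis pair_inj : forall p q, (S `*` S) p -> (S `*` S) q -> pair p = pair q -> p = q.

Let pick (A : set W) := if pselect (A !=set0) is left H then projT1 (cid H) else z0.

Let pickP (A : set W) : A !=set0 -> A (pick A).
Proof. by rewrite /pick; case: pselect => // H _; exact: projT2 (cid H). Qed.

Fixpoint subset_code n (A : set W) :=
  if n is m.+1 then pair (pick A, subset_code m (A `\ pick A)) else z0.

Lemma subset_code_in n A : A `<=` S -> A #= `I_n -> S (subset_code n A).
Proof.
elim: n A => [|n IH] A AS An //=.
have [x Ax _] := eq_cardSP _ _ An; have pA := pickP (ex_intro _ x Ax).
apply: pairS; first exact: AS.
by apply: IH; [move=> y [/AS]|apply: card_eq_setD1].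
Qed.

Lemma subset_code_inj n A B : A `<=` S -> A #= `I_n -> B `<=` S -> B #= `I_n ->
  subset_code n A = subset_code n B -> A = B.
Proof.
elim: n A B => [|n IH] A B AS An BS Bn /=; first by rewrite (card_eq_I0 An) (card_eq_I0 Bn).
have [x Ax _] := eq_cardSP _ _ An; have [y By _] := eq_cardSP _ _ Bn.
have pA := pickP (ex_intro _ x Ax); have pB := pickP (ex_intro _ y By).
have AS' : A `\ pick A `<=` S by move=> z [/AS].
have BS' : B `\ pick B `<=` S by move=> z [/BS].
have An' := card_eq_setD1 An pA; have Bn' := card_eq_setD1 Bn pB.
have SA : (S `*` S) (pick A, subset_code n (A `\ pick A)).
  by split; [apply: AS|apply: subset_code_in].
have SB : (S `*` S) (pick B, subset_code n (B `\ pick B)).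
  by split; [apply: BS|apply: subset_code_in].
move=> /(pair_inj SA SB) [epick /(IH _ _ AS' An' BS' Bn') eAB].
rewrite epick in eAB; apply/seteqP.
split=> z Cz; have [->|zp] := pselect (z = pick B) => //.
- by have [] : (B `\ pick B) z by rewrite -eAB.
- by rewrite -epick.
- by have [] : (A `\ pick B) z by rewrite eAB.
Qed.

End FiniteSubsets.

Lemma finite_subsets_injle W (S : set W) :
  injle [set: nat] S -> injle (S `*` S) S -> injle [set A | A `<=` S /\ finite_set A] S.
Proof.
move=> [e [eS einj]] [pair [pairS pair_inj]].
have z0S := eS 0%N I.
have pairS' a b : S a -> S b -> S (pair (a, b)) by move=> Sa Sb; apply: pairS.
pose size (A : set W) := if pselect (finite_set A) is left H then projT1 (cid H) else 0%N.
have sizeP A : finite_set A -> A #= `I_(size A).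
  by rewrite /size; case: pselect => // H _; exact: projT2 (cid H).
exists (fun A => pair (e (size A), subset_code (e 0%N) pair (size A) A)).
split=> [A [AS /sizeP An]|A B [AS /sizeP An] [BS /sizeP Bn] E].
  by apply: pairS; split; [apply: eS|apply: (subset_code_in z0S pairS')].
have SA : (S `*` S) (e (size A), subset_code (e 0%N) pair (size A) A).
  by split; [apply: eS|apply: (subset_code_in z0S pairS')].
have SB : (S `*` S) (e (size B), subset_code (e 0%N) pair (size B) B).
  by split; [apply: eS|apply: (subset_code_in z0S pairS')].
have [/einj eAB] := pair_inj _ _ SA SB E.
by rewrite -eAB // in Bn *; apply: (subset_code_inj z0S pairS' pair_inj).
Qed.

Lemma injle_finite_subsets T U (A : set T) (B : set U) : injle A B ->
  injle [set X | X `<=` A /\ finite_set X] [set Y | Y `<=` B /\ finite_set Y].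
Proof.
move=> [f [fA fi]]; exists (image^~ f); split.
  move=> X [XA Xf]; split; last exact: finite_image.
  by move=> _ [x Xx <-]; apply/fA/XA.
move=> X Y [XA _] [YA _] E; apply/seteqP; split => x Xx.
  have : (f @` Y) (f x) by rewrite -E; exists x.
  by case=> y Yy /fi <- //; [apply: YA | apply: XA].
have : (f @` X) (f x) by rewrite E; exists x.
by case=> y Xy /fi <- //; [apply: XA | apply: YA].
Qed.

Definition hereditarily_kappa_many K T (F : K -> set T) (X : set T) :=
  forall X', X' `<=` X -> X' #= X -> kappa_many_singletons F X'.

Definition isolates_points K T (F : K -> set T) (X : set T) :=
  forall x, X x -> exists xi, F xi `&` X = [set x].

Lemma kappa_many_singletonsP K T (F : K -> set T) (X : set T) :
  injle [set: K] [set xi | exists x, F xi `&` X = [set x]] -> kappa_many_singletons F X.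
Proof.
move=> KX; apply: injle_card_eq; first exact: subset_injle.
by apply: injle_trans KX (subset_injle _) => xi [x]; apply: card_eq_set1.
Qed.

Lemma setI_subset_set1 T (A X X' : set T) x : X' `<=` X -> X' x ->
  A `&` X = [set x] -> A `&` X' = [set x].
Proof.
move=> X'X X'x AX; apply/seteqP; split=> [y [Ay X'y]|_ ->].
  by rewrite -AX; split=> //; apply: X'X.
by split=> //; have [] : (A `&` X) x by rewrite AX.
Qed.

Lemma hereditarily_kappa_many_image K T V (F : K -> set T) (I : set V) (f : V -> T) :
    {in I &, injective f} ->
    (forall I', I' `<=` I -> I' #= I ->
      injle [set: K] [set eta | exists2 i, I' i & F eta `&` f @` I = [set f i]]) ->
  hereditarily_kappa_many F (f @` I).
Proof.
move=> finj large X' X'X X'eq; pose I' := [set i | I i /\ X' (f i)].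
have fI' : f @` I' = X'.
  apply/seteqP; split=> [_ [i [_ ?] <-] //|y X'y].
  by have [i Ii fi] := X'X _ X'y; exists i => //; split=> //; rewrite fi.
have finj' : {in I' &, injective f}.
  by move=> i j /set_mem [Ii _] /set_mem [Ij _]; apply: finj; rewrite inE.
have I'I : I' #= I.
  apply: card_eq_trans (card_esym (inj_card_eq finj')) _; rewrite fI'.
  exact: card_eq_trans X'eq (inj_card_eq finj).
apply: kappa_many_singletonsP.
have I'sub : I' `<=` I by move=> i [].
apply: injle_trans (large I' I'sub I'I) (subset_injle _) => eta [i [_ X'fi] Feta].
exists (f i).
exact: setI_subset_set1 X'fi Feta.
Qed.

Lemma point_witness K T (F : K -> set T) (k0 : K) x : injle [set: K] [set xi | F xi x] ->
  [/\ [set x] #= [set: unit], hereditarily_kappa_many F [set x] &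
      isolates_points F [set x]].
Proof.
move=> Kx; have Fx xi : F xi x -> F xi `&` [set x] = [set x].
  by move=> Fxi; apply/seteqP; split=> [y [_ ->] //|_ ->].
split; first exact: card_eq_set1.
  move=> X' X'x /card_esym /card_eqPle [/(card_le_injle x) [f [/(_ x erefl) X'fx _]] _].
  have -> : X' = [set x] by apply/seteqP; split=> // _ ->; rewrite -(X'x _ X'fx).
  apply: kappa_many_singletonsP; apply: injle_trans Kx (subset_injle _).
  by move=> xi /Fx; exists x.
by move=> _ ->; have [f [fK _]] := Kx; exists (f k0); apply/Fx/fK.
Qed.

Lemma disjoint_witness K T (F : K -> set T) (k0 : K) (E : set K) (s : K -> T) :
  trivIset E F -> (forall xi, F xi (s xi)) -> injle [set: K] E ->
  [/\ s @` E #= [set: K], hereditarily_kappa_many F (s @` E) & isolates_points F (s @` E)].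
Proof.
move=> Etriv Fs KE.
have sE xi : E xi -> F xi `&` s @` E = [set s xi].
  move=> Exi; apply/seteqP; split=> [y [Fy [xi' Exi' syi]]|_ ->].
    2: by split=> //; exists xi.
  by rewrite -syi (Etriv xi xi') //; exists (s xi'); split=> //; rewrite -syi in Fy.
have sinj : {in E &, injective s}.
  move=> xi xi' /set_mem Exi /set_mem Exi' e; apply: Etriv => //.
  by exists (s xi); split=> //; rewrite e.
have EK : E #= [set: K] by apply: injle_card_eq; first exact: subset_injle.
split; first exact: card_eq_trans (inj_card_eq sinj) EK.
  apply: hereditarily_kappa_many_image => // I' I'E I'eq.
  have KI' := card_eq_injle k0 (card_esym (card_eq_trans I'eq EK)).
  apply: injle_trans KI' (subset_injle _).
  by move=> xi I'xi; exists xi => //; apply/sE/I'E.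
by move=> _ [xi Exi <-]; exists xi; apply: sE.
Qed.

Section Kappa.
Variables (K : Type) (lt : K -> K -> Prop).
Hypothesis lt_irr : forall a, ~ lt a a.
Hypothesis lt_trans : forall a b c, lt a b -> lt b c -> lt a c.
Hypothesis lt_total : forall a b, [\/ lt a b, a = b | lt b a].
Hypothesis lt_wf : well_founded lt.
Definition seg a := [set b | lt b a].
Hypothesis seg_lt_kappa : forall a, ~ injle [set: K] (seg a).
Hypothesis K_infinite : infinite_set [set: K].
Variable k0 : K.

Definition le a b := lt a b \/ a = b.

Lemma lt_le_trans a b c : lt a b -> le b c -> lt a c.
Proof. by move=> ab [bc|<-] //; apply: lt_trans bc. Qed.

Lemma le_lt_trans a b c : le a b -> lt b c -> lt a c.
Proof. by move=> [ab|->] bc //; apply: lt_trans bc. Qed.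

Lemma le_trans a b c : le a b -> le b c -> le a c.
Proof. by move=> [ab|->] // bc; left; apply: lt_le_trans bc. Qed.

Lemma le_refl a : le a a. Proof. by right. Qed.

Lemma not_le_lt a b : ~ le a b -> lt b a.
Proof. by case: (lt_total a b) => // ab nab; case: nab; [left|right]. Qed.

Lemma seg_sub a b : le a b -> seg a `<=` seg b.
Proof. by move=> ab x xa; apply: lt_le_trans ab. Qed.

Lemma lt_unbounded a : exists b, lt a b.
Proof.
apply: contrapT => nb; apply: (@seg_lt_kappa a).
apply: injle_trans (infinite_injle_setD1 K_infinite (I : [set: K] a)) (subset_injle _).
move=> y [_ /= ya]; case: (lt_total y a) => [//|ya'|ay]; first by case: ya.
by case: nb; exists y.
Qed.

Definition maxo a b := if `[< lt a b >] then b else a.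

Lemma le_maxol a b : le a (maxo a b).
Proof. by rewrite /maxo; case: asboolP => ab; [left|right]. Qed.

Lemma le_maxor a b : le b (maxo a b).
Proof.
rewrite /maxo; case: asboolP => [_|ab]; first by right.
by case: (lt_total a b) => [//|->|]; [right|left].
Qed.

Lemma maxo_id a b : maxo a b = a \/ maxo a b = b.
Proof. by rewrite /maxo; case: asboolP; [right|left]. Qed.

Lemma finite_ub (A : set K) : finite_set A -> exists b, forall x, A x -> lt x b.
Proof.
move=> [n]; elim: n A => [|n IH] A; first by move=> /card_eq_I0 ->; exists k0.
move=> /eq_cardSP [x Ax /IH [b Hb]]; have [y xy] := lt_unbounded x.
exists (maxo b y) => z Az; have [->|zx] := pselect (z = x).
  exact: lt_le_trans xy (le_maxor _ _).
exact: lt_le_trans (Hb _ (conj Az zx)) (le_maxol _ _).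
Qed.

(* [small Z] is [|Z| < kappa]. *)
Definition small V (Z : set V) := exists a, injle Z (seg a).

Lemma small_injle U V (A : set U) (B : set V) : injle A B -> small B -> small A.
Proof. by move=> AB [a Ba]; exists a; apply: injle_trans Ba. Qed.

Lemma small_seg a : small (seg a).
Proof. by exists a; apply: injle_refl. Qed.

Lemma small_not_kappa V (Z : set V) : small Z -> ~ injle [set: K] Z.
Proof. by move=> [a Za] KZ; apply: (@seg_lt_kappa a); apply: injle_trans Za. Qed.

Lemma not_kappa_small V (Z : set V) : ~ injle [set: K] Z -> small Z.
Proof.
move=> nKZ; have [[v0 _]|Z0] := pselect (Z !=set0); last first.
  by exists k0, (fun _ => k0); split=> [x Zx|x y Zx]; case: Z0; exists x.
have [//|[w _ Hw]] := injle_or_injle_segment lt_wf lt_total v0 [set: K] Z.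
by exists w; apply: injle_trans Hw (subset_injle _) => y [].
Qed.

Lemma finite_small V (Z : set V) : finite_set Z -> small Z.
Proof. by move=> Zf; apply: not_kappa_small => /injle_finite /(_ Zf). Qed.

Lemma small_card_seg V (v0 : V) (Z : set V) : small Z ->
  exists r, injle Z (seg r) /\ injle (seg r) Z.
Proof.
move=> [a Za]; have [r Zr rleast] :=
  wf_least lt_wf (ex_intro _ a Za : [set a | injle Z (seg a)] !=set0).
exists r; split => //.
have [//|[w rw Hw]] := injle_or_injle_segment lt_wf lt_total v0 (seg r) Z.
by case: (rleast w) => //; apply: injle_trans Hw (subset_injle _) => y [].
Qed.

(* Hessenberg's order on pairs: first by maximum, then lexicographically. *)
Definition maxlex (p q : K * K) := lt (maxo p.1 p.2) (maxo q.1 q.2) \/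
  (maxo p.1 p.2 = maxo q.1 q.2 /\ (lt p.1 q.1 \/ (p.1 = q.1 /\ lt p.2 q.2))).

Lemma maxlex_wf : well_founded maxlex.
Proof.
suff H m a b : maxo a b = m -> Acc maxlex (a, b) by move=> [a b]; exact: H erefl.
elim/(well_founded_ind lt_wf): m a b => m IHm a.
elim/(well_founded_ind lt_wf): a => a IHa b.
elim/(well_founded_ind lt_wf): b => b IHb Em.
constructor => -[a' b']; rewrite /maxlex /= => -[H|[E [H|[Ea Hb]]]].
- by apply: (IHm (maxo a' b')) => //; rewrite -Em.
- by apply: (IHa a') => //; rewrite E.
- by rewrite Ea; apply: IHb => //; rewrite -Ea E.
Qed.

Lemma maxlex_total p q : [\/ maxlex p q, p = q | maxlex q p].
Proof.
case: p q => [a b] [a' b']; rewrite /maxlex /=.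
case: (lt_total (maxo a b) (maxo a' b')) => [H|E|H].
- by apply: Or31; left.
- case: (lt_total a a') => [H|Ea|H].
  + by apply: Or31; right; split => //; left.
  + subst a'; case: (lt_total b b') => [H|Eb|H]; last 2 first.
    * by subst b'; apply: Or32.
    * by apply: Or33; right; split => //; right.
    by apply: Or31; right; split => //; right.
  + by apply: Or33; right; split => //; left.
- by apply: Or33; left.
Qed.

(* Reduce to the least [r] with [|seg r| = |seg b|].  If [seg r * seg r] does
   not embed into [seg r], then [seg r] embeds into a proper initial segment of
   [maxlex], which lies in some [seg g * seg g] with [g < r]; by induction that
   has size [|seg g|], contradicting the minimality of [r]. *)
Lemma seg_square_injle b : infinite_set (seg b) -> injle (seg b `*` seg b) (seg b).
Proof.
elim/(well_founded_ind lt_wf): b => b IH binf.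
have [r rb rleast] := wf_least lt_wf
  (ex_intro _ b (injle_refl _) : [set a | injle (seg b) (seg a)] !=set0).
have rb' : injle (seg r) (seg b).
  have [//|[w rw Hw]] := injle_or_injle_segment lt_wf lt_total k0 (seg r) (seg b).
  by case: (rleast w) => //; apply: injle_trans Hw (subset_injle _) => y [].
case: (lt_total r b) => [rltb|Erb|bltr]; last by case: (rleast b (injle_refl _)).
  have rinf : infinite_set (seg r) by move=> /(injle_finite rb).
  apply: injle_trans (injle_setX rb rb) _.
  exact: injle_trans (IH _ rltb rinf) rb'.
subst r; have [//|[w [/= w1 w2] Hw]] :=
  injle_or_injle_segment maxlex_wf maxlex_total k0 (seg b `*` seg b) (seg b).
exfalso; set g := maxo w.1 w.2.
have gb : lt g b by rewrite /g; case: (maxo_id w.1 w.2) => ->.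
pose below := [set x | le x g].
have sub : [set y | (seg b `*` seg b) y /\ maxlex y w] `<=` below `*` below.
  move=> [y1 y2] [_ /= Hy]; have Hm : le (maxo y1 y2) g.
    by case: Hy => [H|[E _]]; [left|right].
  by split; [apply: le_trans (le_maxol _ _) Hm|apply: le_trans (le_maxor _ _) Hm].
have bbelow := injle_trans Hw (subset_injle sub).
have [belowf|belowinf] := pselect (finite_set below).
  by apply: binf; apply: injle_finite bbelow _; apply: finite_setX.
have belowg : injle below (seg g).
  apply: injle_trans (infinite_injle_setD1 belowinf (le_refl g)) (subset_injle _).
  by move=> x [[//|->] /= ]; case.
have ginf : infinite_set (seg g) by move=> /(injle_finite belowg).
apply: (rleast g) => //=.
apply: injle_trans bbelow _; apply: injle_trans (injle_setX belowg belowg) _.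
exact: IH.
Qed.

Lemma small_setX U V (A : set U) (B : set V) : small A -> small B -> small (A `*` B).
Proof.
move=> [a Aa] [b Bb]; set m := maxo a b.
have Am := injle_trans Aa (subset_injle (seg_sub (le_maxol a b))).
have Bm := injle_trans Bb (subset_injle (seg_sub (le_maxor a b))).
have ABm := injle_setX Am Bm.
have [mf|minf] := pselect (finite_set (seg m)).
  by apply: small_injle ABm (finite_small _); apply: finite_setX.
by exists m; apply: injle_trans ABm (seg_square_injle minf).
Qed.

Lemma small_setU V (A B : set V) : small A -> small B -> small (A `|` B).
Proof.
move=> [a [fa [faA fai]]] [b [fb [fbB fbi]]].
have [k1 k01] := lt_unbounded k0.
have [m mab] := lt_unbounded (maxo (maxo a b) k1).
have am : lt a m by apply: le_lt_trans mab; apply: le_trans (le_maxol _ _) (le_maxol _ _).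
have bm : lt b m by apply: le_lt_trans mab; apply: le_trans (le_maxor _ _) (le_maxol _ _).
have k1m : lt k1 m by apply: le_lt_trans mab; apply: le_maxor.
apply: small_injle (small_setX (small_seg m) (small_seg m)).
exists (fun v => if `[< A v >] then (fa v, k0) else (fb v, k1)); split.
  move=> v ABv; case: asboolP => [Av|nAv]; split => /=.
  - exact: lt_trans (faA _ Av) am.
  - exact: lt_trans k01 k1m.
  - by case: ABv => // Bv; exact: lt_trans (fbB _ Bv) bm.
  - exact: k1m.
move=> v v' ABv ABv'; case: asboolP => [Av|nAv]; case: asboolP => [Av'|nAv'].
- by case=> /fai; apply.
- by case=> _ e; move: k01; rewrite e => /lt_irr.
- by case=> _ e; move: k01; rewrite -e => /lt_irr.
- case: ABv => // Bv; case: ABv' => // Bv'.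
  by case=> /fbi; apply.
Qed.

Lemma small_setX_nat V (Z : set V) :
  small Z -> infinite_set Z -> injle (Z `*` [set: nat]) Z.
Proof.
move=> Zsmall Zinf; have [v0 _] := infinite_setN0 Zinf.
have [r [Zr rZ]] := small_card_seg v0 Zsmall.
have rinf : infinite_set (seg r) by move=> /(injle_finite Zr).
apply: injle_trans (injle_setX Zr (infinite_injle_nat k0 rinf)) _.
exact: injle_trans (seg_square_injle rinf) rZ.
Qed.

Lemma small_finite_subsets V (U : set V) : (exists r, infinite_set (seg r)) -> small U ->
  small [set A | A `<=` U /\ finite_set A].
Proof.
move=> [r rinf] [a Ua]; set m := maxo a r.
have minf : infinite_set (seg m).
  by move=> /(sub_finite_set (seg_sub (le_maxor a r))).
have Um := injle_trans Ua (subset_injle (seg_sub (le_maxol a r))).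
exists m; apply: injle_trans (injle_finite_subsets Um) _.
exact: finite_subsets_injle (infinite_injle_nat k0 minf) (seg_square_injle minf).
Qed.

Lemma large_fiber V (g : K -> V) (Y : set K) a : ~ small Y -> small (g @` Y) ->
  exists2 eta, Y eta & injle (seg a) [set e | g e = g eta].
Proof.
move=> Ylarge gYsmall; apply: contrapT => nfiber; apply: Ylarge.
have /choice [code codeP] : forall v, exists f : K -> K,
    (exists2 eta, Y eta & g eta = v) -> (forall e, g e = v -> seg a (f e)) /\
      (forall e e', g e = v -> g e' = v -> f e = f e' -> e = e').
  move=> v; have [[eta Yeta <-]|nv] := pselect (exists2 eta, Y eta & g eta = v).
    2: by exists id => /nv.
  have [fib|[w wa [f [fw finj]]]] :=
    injle_or_injle_segment lt_wf lt_total k0 (seg a) [set e | g e = g eta].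
    by case: nfiber; exists eta.
  exists f => _; split=> [e /fw [_ /= ew]|]; [exact: lt_trans ew wa|exact: finj].
apply: small_injle (small_setX gYsmall (small_seg a)).
exists (fun eta => (g eta, code (g eta) eta)); split=> [eta Yeta|eta eta' Yeta Yeta' [e]].
  by split; [exists eta|apply: (codeP _ (ex_intro2 _ _ eta Yeta erefl)).1].
by rewrite -e; apply: (codeP _ (ex_intro2 _ _ eta Yeta erefl)).2.
Qed.

Lemma cofinal_infinite C : cofinal lt C -> infinite_set C.
Proof.
move=> Ccof /finite_ub [b Hb]; have [c Cc bc] := Ccof b; have cb := Hb c Cc.
case: bc => [bc|ebc]; first exact: lt_irr (lt_trans bc cb).
by rewrite ebc in cb; apply: lt_irr cb.
Qed.

Lemma not_cofinal_ub (S : set K) : ~ cofinal lt S -> exists b, forall c, S c -> lt c b.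
Proof.
move=> Sncof; apply: contrapT => nb; apply: Sncof => a.
apply: contrapT => na; apply: nb; exists a => c Sc; apply: not_le_lt => ac.
by apply: na; exists c.
Qed.

(* [I] is the ordinal cf(kappa), realised as an initial segment of [K]. *)
Lemma cofinality_witness : exists C I, [/\ cofinal lt C,
  forall C', cofinal lt C' -> injle C C', injle I C, injle C I &
  forall i, I i -> ~ injle C (seg i)].
Proof.
have [[m0 Hm0]|nb] := pselect (exists m C, cofinal lt C /\ injle C (seg m)); last first.
  exists [set: K], [set: K]; split.
  - by move=> a; exists a => //; right.
  - move=> C' C'cof; apply: contrapT => /not_kappa_small [m Hm].
    by apply: nb; exists m, C'.
  - exact: injle_refl.
  - exact: injle_refl.
  - by move=> i _; apply: seg_lt_kappa.
have [m [C [Ccof Cm]] mleast] := wf_least lt_wf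
  (ex_intro _ m0 Hm0 : [set m | exists C, cofinal lt C /\ injle C (seg m)] !=set0).
have minC C' : cofinal lt C' -> injle (seg m) C'.
  move=> C'cof; have [c _ _] := C'cof k0.
  have [//|[w mw Hw]] := injle_or_injle_segment lt_wf lt_total c (seg m) C'.
  exfalso; apply: (mleast w) => //; exists C'; split => //.
  by apply: injle_trans Hw (subset_injle _) => y [].
exists C, (seg m); split => //.
- by move=> C' /minC; apply: injle_trans Cm.
- exact: minC.
- by move=> i im Ci; apply: (mleast i) => //; exists C.
Qed.

Section Cofinality.
Variables (C I : set K) (h : K -> K).
Hypothesis C_cofinal : cofinal lt C.
Hypothesis C_min : forall C', cofinal lt C' -> injle C C'.
Hypothesis I_C : injle I C.
Hypothesis hC : forall c, C c -> I (h c).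
Hypothesis h_inj : forall c c', C c -> C c' -> h c = h c' -> c = c'.
Hypothesis I_seg : forall i, I i -> ~ injle C (seg i).

Lemma C_I : injle C I.
Proof. by exists h; split=> [c Cc|]; [exact: hC|exact: h_inj]. Qed.

Lemma lt_cf_small V (Z : set V) : ~ injle C Z -> small Z.
Proof.
by move=> CZ; apply: not_kappa_small => /(injle_trans (subset_injle (@subsetT _ C))).
Qed.

Lemma lt_cf_ub (S : set K) : ~ injle C S -> exists b, forall c, S c -> lt c b.
Proof. by move=> CS; apply: not_cofinal_ub => /C_min. Qed.

Lemma cf_bound i : I i -> exists b, forall c, C c -> le (h c) i -> lt c b.
Proof.
move=> Ii; pose S := [set c | C c /\ le (h c) i].
suff [b Sb] : exists b, forall c, S c -> lt c b by exists b => c Cc hci; apply: Sb.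
apply: lt_cf_ub => CS.
have SI : injle S [set j | I j /\ le j i].
  exists h; split=> [c [Cc hci]|c c' [Cc _] [Cc' _]]; last exact: h_inj.
  by split=> //; apply: hC.
have [fin|inf] := pselect (finite_set [set j | I j /\ le j i]).
  by apply: (cofinal_infinite C_cofinal); apply: injle_finite (injle_trans CS SI) fin.
apply: (I_seg Ii); apply: injle_trans CS (injle_trans SI _).
apply: injle_trans (infinite_injle_setD1 inf (conj Ii (le_refl i))) (subset_injle _).
by move=> j [[Ij [ji|->]] /= nji].
Qed.

(* Fewer than cf(kappa) ordinals have a common upper bound [b], so the union
   embeds into [D * seg b]. *)
Lemma small_bigcup_lt_cf V (D : set V) (B : V -> set K) :
  ~ injle C D -> (forall t, D t -> small (B t)) -> small (\bigcup_(t in D) B t).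
Proof.
move=> CD Bsmall; have [[t0 Dt0]|D0] := pselect (D !=set0); last first.
  apply: finite_small; suff -> : \bigcup_(t in D) B t = set0 by exact: finite_set0.
  by apply/seteqP; split=> // eta [t Dt _]; case: D0; exists t.
have /choice [bd bdP] : forall t, exists p : K * (K -> K), D t ->
    (forall x, B t x -> lt (p.2 x) p.1) /\
    (forall x y, B t x -> B t y -> p.2 x = p.2 y -> x = y).
  move=> t; have [Dt|nDt] := pselect (D t); last by exists (k0, id).
  by have [a [f [fB finj]]] := Bsmall t Dt; exists (a, f).
have [b bdb] : exists b, forall c, ((fun t => (bd t).1) @` D) c -> lt c b.
  by apply: lt_cf_ub => /injle_trans /(_ (injle_image t0 _ _)).
have /choice [idx idxP] :
    forall eta, exists t, (\bigcup_(t in D) B t) eta -> D t /\ B t eta.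
  move=> eta; have [[t Dt Bt]|nU] := pselect ((\bigcup_(t in D) B t) eta).
    by exists t.
  by exists t0 => /nU.
apply: small_injle (small_setX (lt_cf_small CD) (small_seg b)).
exists (fun eta => (idx eta, (bd (idx eta)).2 eta)); split.
  move=> eta /idxP [Dt Bt]; split=> //=.
  by apply: lt_trans (bdb _ (ex_intro2 _ _ _ Dt erefl)); apply: (bdP _ Dt).1.
move=> eta eta' /idxP [Dt Bt] /idxP [_ Bt'] [e e2].
by rewrite -e in Bt' e2; apply: (bdP _ Dt).2 _ _ Bt Bt' e2.
Qed.

Lemma lt_cf_bigcup_finite T i (A : K -> set T) : I i ->
  (forall j, I j -> lt j i -> finite_set (A j)) ->
  ~ injle C (\bigcup_(j in [set j | I j /\ lt j i]) A j).
Proof.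
move=> Ii Afin; set D := [set j | I j /\ lt j i].
have {}Afin j : D j -> finite_set (A j) by move=> [Ij ji]; apply: Afin.
have [Dfin|Dinf] := pselect (finite_set D).
  move=> /injle_finite CW; apply: (cofinal_infinite C_cofinal); apply: CW.
  exact: bigcup_finite.
have Dsmall : small D by exists i; apply: subset_injle => j [].
move=> CW; apply: (I_seg Ii); apply: injle_trans CW _.
apply: injle_trans (injle_bigcup_finite k0 Afin) _.
by apply: injle_trans (small_setX_nat Dsmall Dinf) (subset_injle _) => j [].
Qed.

Variable cb : K -> K.
Hypothesis cbP : forall i, I i -> forall c, C c -> le (h c) i -> lt c (cb i).

Lemma cofinal_index (I' : set K) : I' `<=` I -> injle C I' ->
  forall eta, exists i, I' i /\ lt eta (cb i).
Proof.
move=> I'I CI' eta; have [c Cc ec] := C_cofinal eta.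
apply: contrapT => ni; apply: (I_seg (hC Cc)).
apply: injle_trans CI' (subset_injle _) => i I'i; apply: not_le_lt => hci.
by apply: ni; exists i; split=> //; apply: le_lt_trans ec (cbP (I'I _ I'i) Cc hci).
Qed.

Section Traces.
Variables (T : Type) (F : K -> set T) (E : set K).
Hypothesis F_finite_neq0 : forall xi, finite_set (F xi) /\ F xi !=set0.
Hypothesis point_small : forall x, small [set xi | F xi x].
Hypothesis E_max : maximal_disjoint_subcollection F E [set: K].
Hypothesis E_small : small E.

Let U := \bigcup_(xi in E) F xi.
Let trace eta := F eta `&` U.
Let fiber (A : set T) := [set eta | trace eta = A].

Lemma trace_neq0 eta : trace eta !=set0.
Proof.
apply: contrapT => tr0; have [_ Etriv Emax] := E_max.
have nE : ~ E eta.
  move=> Eeta; have [u Fu] := (F_finite_neq0 eta).2.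
  by apply: tr0; exists u; split=> //; exists eta.
apply: (Emax (E `|` [set eta])) => //.
  by split; [exact: subsetUl|move=> /(_ eta (or_intror erefl))].
move=> i j [Ei|->] [Ej|->] [t [Fi Fj]] //.
- by apply: Etriv => //; exists t.
- by case: tr0; exists t; split => //; exists i.
- by case: tr0; exists t; split => //; exists j.
Qed.

Lemma U_small : small U.
Proof.
have Ffin xi : E xi -> finite_set (F xi) by move=> _; apply: (F_finite_neq0 xi).1.
have [Efin|Einf] := pselect (finite_set E); first exact/finite_small/bigcup_finite.
apply: small_injle E_small.
exact: injle_trans (injle_bigcup_finite k0 Ffin) (small_setX_nat E_small Einf).
Qed.

Lemma exists_infinite_seg : exists r, infinite_set (seg r).
Proof.
apply: contrapT => nr; have segfin a : finite_set (seg a).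
  by apply: contrapT => ainf; apply: nr; exists a.
have smallfin V (Z : set V) : small Z -> finite_set Z.
  by move=> [a Za]; apply: injle_finite Za (segfin a).
apply: K_infinite; suff -> : [set: K] = \bigcup_(x in U) [set xi | F xi x].
  by apply: bigcup_finite => [|x _]; apply: smallfin; [exact: U_small|exact: point_small].
by apply/seteqP; split => // xi _; have [u [Fu Uu]] := trace_neq0 xi; exists u.
Qed.

Lemma fresh_trace (W : set T) a : ~ injle C W ->
  exists eta, trace eta `&` W = set0 /\ injle (seg a) (fiber (trace eta)).
Proof.
move=> CW; pose hit := \bigcup_(t in W) [set eta | F eta t].
have hit_small : small hit by apply: small_bigcup_lt_cf.
have miss_large : ~ small (~` hit).
  move=> /small_setU /(_ hit_small) /small_not_kappa; apply.
  by apply: subset_injle => eta _; case: (pselect (hit eta)); [right|left].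
have [|eta miss fib] := @large_fiber _ trace _ a miss_large.
  apply: small_injle (small_finite_subsets exists_infinite_seg U_small).
  apply: subset_injle => _ [eta _ <-]; split=> [t []//|].
  exact/finite_setIl/(F_finite_neq0 eta).1.
exists eta; split=> //; apply/seteqP; split=> // t [[Ft _] Wt].
by apply: miss; exists t.
Qed.

Lemma disjoint_traces : exists A : K -> set T,
  (forall i, I i -> (exists eta, trace eta = A i) /\ injle (seg (cb i)) (fiber (A i))) /\
  (forall i j, I i -> I j -> lt j i -> A j `&` A i = set0).
Proof.
apply: (wf_disjoint_choice lt_wf
  (P := fun i B => (exists eta, trace eta = B) /\ injle (seg (cb i)) (fiber B))).
move=> i A Ii PA.
have Afin j : I j -> lt j i -> finite_set (A j).
  move=> Ij ji; have [[eta <-] _] := PA j Ij ji.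
  exact/finite_setIl/(F_finite_neq0 eta).1.
have [eta [disj fib]] := fresh_trace (cb i) (lt_cf_bigcup_finite Ii Afin).
exists (trace eta); first by split=> //; exists eta.
move=> j Ij ji; apply/seteqP; split=> // t [Ajt trt].
by rewrite -disj; split=> //; exists j.
Qed.

Section Selector.
Variables (A : K -> set T) (x : K -> T).
Hypothesis A_trace : forall i, I i -> exists eta, trace eta = A i.
Hypothesis A_fiber : forall i, I i -> injle (seg (cb i)) (fiber (A i)).
Hypothesis A_disj : forall i j, I i -> I j -> lt j i -> A j `&` A i = set0.
Hypothesis xA : forall i, I i -> A i (x i).

Lemma A_inj i j t : I i -> I j -> A i t -> A j t -> i = j.
Proof.
move=> Ii Ij Ait Ajt; have [ji|//|ij] := lt_total j i.
  by have := A_disj Ii Ij ji; rewrite -subset0 => /(_ t (conj Ajt Ait)).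
by have := A_disj Ij Ii ij; rewrite -subset0 => /(_ t (conj Ait Ajt)).
Qed.

Lemma trace_selector i eta : I i -> trace eta = A i -> F eta `&` x @` I = [set x i].
Proof.
move=> Ii trE; apply/seteqP; split=> [t [Ft [j Ij xjt]]|_ ->].
  subst t; have [zeta trj] := A_trace Ij.
  have [_ Uxj] : trace zeta (x j) by rewrite trj; apply: xA.
  have Aixj : A i (x j) by rewrite -trE; split.
  by rewrite (A_inj Ii Ij Aixj (xA Ij)).
have [] : trace eta (x i) by rewrite trE; apply: xA.
by split=> //; exists i.
Qed.

Lemma selector_inj : {in I &, injective x}.
Proof.
move=> i j /set_mem Ii /set_mem Ij e; apply: (A_inj Ii Ij (xA Ii)).
by rewrite e; apply: xA.
Qed.

Lemma selector_isolates : isolates_points F (x @` I).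
Proof.
by move=> _ [i Ii <-]; have [eta trE] := A_trace Ii; exists eta; apply: trace_selector.
Qed.

Lemma selector_card_is_cf : card_is_cf lt (x @` I).
Proof.
exists C; split=> // [C' /C_min /injle_card_le //|].
exact: card_eq_trans (inj_card_eq selector_inj) (injle_card_eq I_C C_I).
Qed.

Lemma selector_hereditary : hereditarily_kappa_many F (x @` I).
Proof.
apply: hereditarily_kappa_many_image selector_inj _ => I' I'I I'eq.
have CI' : injle C I'.
  apply: (card_eq_injle k0).
  exact: card_eq_trans (injle_card_eq C_I I_C) (card_esym I'eq).
have /choice [idx idxP] := cofinal_index I'I CI'.
have /choice [code codeP] : forall i, exists f : K -> K, I i ->
    (forall eta, seg (cb i) eta -> trace (f eta) = A i) /\
    (forall eta eta', seg (cb i) eta -> seg (cb i) eta' -> f eta = f eta' -> eta = eta').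
  move=> i; have [Ii|nIi] := pselect (I i); last by exists id => /nIi.
  by have [f [fA finj]] := A_fiber Ii; exists f.
exists (fun eta => code (idx eta) eta); split=> [eta _|eta eta' _ _ e].
  have [I'idx lt_idx] := idxP eta; have [trE _] := codeP _ (I'I _ I'idx).
  by exists (idx eta) => //; apply: trace_selector (I'I _ I'idx) _; apply: trE.
have [/I'I Ii lt_idx] := idxP eta; have [/I'I Ii' lt_idx'] := idxP eta'.
have [trE code_inj] := codeP _ Ii; have [trE' _] := codeP _ Ii'.
have e_idx : idx eta = idx eta'.
  apply: (A_inj Ii Ii' (xA Ii)).
  by rewrite -(trE' _ lt_idx') -e trE //; apply: xA.
by rewrite -e_idx in e lt_idx'; apply: code_inj e.
Qed.

End Selector.

Lemma cf_witness : exists X,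
  [/\ card_is_cf lt X, hereditarily_kappa_many F X & isolates_points F X].
Proof.
have [A [AP A_disj]] := disjoint_traces.
have /choice [x xA] : forall i, exists t, I i -> A i t.
  move=> i; have [Ii|nIi] := pselect (I i); last first.
    by have [t _] := (F_finite_neq0 i).2; exists t => /nIi.
  by have [[eta <-] _] := AP i Ii; have [t trt] := trace_neq0 eta; exists t.
have A_trace i : I i -> exists eta, trace eta = A i by move=> /AP [].
have A_fiber i : I i -> injle (seg (cb i)) (fiber (A i)) by move=> /AP [].
exists (x @` I); split.
- exact: selector_card_is_cf A_disj xA.
- exact: selector_hereditary A_trace A_fiber A_disj xA.
- exact: selector_isolates A_trace A_disj xA.
Qed.

End Traces.

End Cofinality.

Lemma singleton_selector_exists T (F : K -> set T) :
  (forall xi, finite_set (F xi) /\ F xi !=set0) ->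
  exists X, [/\ X #= [set: unit] \/ card_is_cf lt X \/ X #= [set: K],
    hereditarily_kappa_many F X & isolates_points F X].
Proof.
move=> F_finite_neq0.
have [[x Kx]|npoint] := pselect (exists x, injle [set: K] [set xi | F xi x]).
  by have [? ? ?] := point_witness k0 Kx; exists [set x]; split=> //; left.
have point_small x : small [set xi | F xi x].
  by apply: not_kappa_small => Kx; apply: npoint; exists x.
have [E Emax] := ex_maximal_disjoint_subcollection F [set: K].
have /choice [s sF] : forall xi, exists t, F xi t by move=> xi; apply: (F_finite_neq0 xi).2.
have [KE|/not_kappa_small Esmall] := pselect (injle [set: K] E).
  have [? ? ?] := disjoint_witness k0 (let: And3 _ Etriv _ := Emax in Etriv) sF KE.
  by exists (s @` E); split=> //; right; right.
have [C [I [C_cofinal C_min I_C [h [hC h_inj]] I_seg]]] := cofinality_witness.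
have /choice [cb cbP] : forall i, exists b, I i -> forall c, C c -> le (h c) i -> lt c b.
  move=> i; have [Ii|nIi] := pselect (I i); last by exists k0 => /nIi.
  by have [b bP] := cf_bound C_cofinal C_min hC h_inj I_seg Ii; exists b.
have [X [? ? ?]] := cf_witness C_cofinal C_min I_C hC h_inj I_seg cbP
  F_finite_neq0 point_small Emax Esmall.
by exists X; split=> //; right; left.
Qed.

End Kappa.

Theorem theorem2 (K : Type) (lt : K -> K -> Prop) (T : Type) (F : K -> set T) :
  initial_ordinal lt ->
  infinite_set [set: K] ->
  (forall xi, finite_set (F xi) /\ F xi !=set0) ->
  exists X : set T,
    [/\ kappa_many_singletons F X,
        (X #= [set: unit] \/ card_is_cf lt X \/ X #= [set: K]),
        (forall X' : set T, X' `<=` X -> X' #= X -> kappa_many_singletons F X') &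
        (forall x, X x -> exists xi : K, F xi `&` X = [set x])].
Proof.
move=> [lt_irr lt_trans lt_total lt_wf lt_init] Kinf Fh.
have [k0 _] := infinite_setN0 Kinf.
have seg_lt_kappa a : ~ injle [set: K] (seg lt a) by move=> /injle_card_le; apply: lt_init.
have [X [Xcard Xher Xiso]] :=
  singleton_selector_exists lt_irr lt_trans lt_total lt_wf seg_lt_kappa Kinf k0 Fh.
by exists X; split=> //; apply: Xher.
Qed.
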